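(* Let $H\in(0,1/2)$, $\lambda,\theta>0$, $a\neq0$, let $$R_Y(\tau)=\theta^2\Big(\frac{\Gamma(2H+1)\cosh(\lambda\tau)}{2\lambda^{2H}}-H\int_0^\tau\cosh(\lambda(\tau-u))\,u^{2H-1}\,\mathsf{d}u\Big),\qquad\tau\ge0,$$ and $R_{Z^{(a)}}(\tau)=\exp(a^2R_Y(0))\big(\exp(a^2R_Y(\tau))-1\big)$, $\tau\ge0$. Then $R_{Z^{(a)}}\in\mathcal{C}^\infty((0,\infty);\mathbb{R})$ and $$R_{Z^{(a)}}(\tau)=c_0-c_1\tau^{2H}+o(\tau^{2H}),\qquad\tau\to0,$$ with $c_0=\exp(a^2R_Y(0))\big(\exp(a^2R_Y(0))-1\big)$ and $c_1=\frac{a^2\theta^2}{2}\exp(2a^2R_Y(0))$.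
   Context: $R_Y$ is the covariance function of the stationary fractional Ornstein–Uhlenbeck process $Y_t=\mu+\theta e^{-\lambda t}\int_{-\infty}^te^{\lambda s}\,\mathsf{d}B_s$ (with $B$ a fractional Brownian motion of Hurst parameter $H$), and $R_{Z^{(a)}}$ is the covariance function of the stationary process $Z^{(a)}_t=e^{a(Y_t-\mu)}$, i.e. $\mathrm{Cov}(Z^{(a)}_s,Z^{(a)}_t)=R_{Z^{(a)}}(|t-s|)$. *)

From Stdlib Require Import Reals.
From Coquelicot Require Import Coquelicot.
Open Scope R_scope.

Definition Gamma (s : R) : R :=
  RInt_gen (fun t => Rpower t (s - 1) * exp (- t)) (at_right 0) (Rbar_locally p_infty).

Definition R_Y (H lambda theta : R) (tau : R) : R :=
  theta ^ 2 *
  (Gamma (2 * H + 1) * cosh (lambda * tau) / (2 * Rpower lambda (2 * H))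
   - H * RInt_gen (fun u => cosh (lambda * (tau - u)) * Rpower u (2 * H - 1))
                  (at_right 0) (at_point tau)).

Definition R_Z (H lambda theta a : R) (tau : R) : R :=
  exp (a ^ 2 * R_Y H lambda theta 0) * (exp (a ^ 2 * R_Y H lambda theta tau) - 1).

From Stdlib Require Import Reals Lra.
From Coquelicot Require Import Coquelicot.
Open Scope R_scope.

(* For [tau > 0], an integration by parts against [u^(2H) / (2H)] removes the
   singularity of the integrand in [R_Y]:
     int_0^tau cosh(lam (tau - u)) u^(2H-1) du
       = tau^(2H) / (2H) + lam / (2H) int_0^tau sinh(lam (tau - u)) u^(2H) du.
   Expanding sinh(lam (tau - u)) by the subtraction formula writes [R_Y], hence
   [R_Z], in terms of cosh, sinh, powers and integrals from 0 of continuous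
   functions, a family closed under differentiation on (0, oo): this gives
   smoothness.  The same formula gives
     R_Y(tau) = R_Y(0) - theta^2/2 tau^(2H) + o(tau^(2H)),
   since cosh(lam tau) - 1 = o(tau) and the last integral is O(tau^(1+2H)); a
   first-order expansion of exp at 0 turns this into the expansion of [R_Z]. *)

Lemma is_derive_Rpower (y x : R) :
  0 < x -> is_derive (fun u => Rpower u y) x (y * Rpower x (y - 1)).
Proof. intro Hx. apply is_derive_Reals, derivable_pt_lim_power; assumption. Qed.

Lemma exp_le (x y : R) : x <= y -> exp x <= exp y.
Proof.
  intros [Hxy | <-]; [left; apply exp_increasing; assumption | right; reflexivity].
Qed.

Lemma Rpower_ge_base (x y : R) : 0 < x < 1 -> y <= 1 -> x <= Rpower x y.
Proof.
  intros Hx Hy.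
  assert (Hln : ln x < 0) by (rewrite <- ln_1; apply ln_increasing; lra).
  rewrite <- (exp_ln x) at 1 by lra.
  apply exp_le. nra.
Qed.

Lemma continuous_at_right (f : R -> R) (x : R) :
  continuous f x -> filterlim f (at_right x) (locally (f x)).
Proof. intro Hf. exact (filterlim_filter_le_1 _ (filter_le_within (F := locally x) _) Hf). Qed.

(* Stdlib's [Rpower 0 y] is [exp (y * ln 0) = 1], since [ln 0 = 0].  Extended by [0]
   on [(-oo, 0]] instead, the power is continuous everywhere when [y > 0]. *)
Definition Rpower0 (x y : R) : R := if Rlt_dec 0 x then Rpower x y else 0.

Lemma Rpower0_pos (x y : R) : 0 < x -> Rpower0 x y = Rpower x y.
Proof. intro Hx. unfold Rpower0. destruct (Rlt_dec 0 x); [reflexivity | lra]. Qed.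

Lemma Rpower0_nonpos (x y : R) : x <= 0 -> Rpower0 x y = 0.
Proof. intro Hx. unfold Rpower0. destruct (Rlt_dec 0 x); [lra | reflexivity]. Qed.

Lemma continuous_Rpower0 (y x : R) : 0 < y -> continuous (fun u => Rpower0 u y) x.
Proof.
  intro Hy. destruct (Rtotal_order x 0) as [Hx | [-> | Hx]].
  - apply continuous_ext_loc with (fun _ => 0); [|apply continuous_const].
    apply (filter_imp (fun u => u < 0)); [|exact (open_lt 0 x Hx)].
    intros u Hu. symmetry. apply Rpower0_nonpos. lra.
  - apply filterlim_locally. intros eps.
    assert (Hd : 0 < Rpower eps (/ y)) by apply exp_pos.
    exists (mkposreal _ Hd). intros u Hu.
    change (Rabs (u - 0) < Rpower eps (/ y)) in Hu.
    change (Rabs (Rpower0 u y - Rpower0 0 y) < eps).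
    rewrite (Rpower0_nonpos 0) by lra. rewrite Rminus_0_r in *.
    destruct (Rle_or_lt u 0) as [Hu0 | Hu0].
    + rewrite Rpower0_nonpos, Rabs_R0 by assumption. apply cond_pos.
    + rewrite Rpower0_pos, Rabs_pos_eq in * by (try left; try apply exp_pos; lra).
      replace (pos eps) with (Rpower (Rpower eps (/ y)) y)
        by (rewrite Rpower_mult, Rinv_l, Rpower_1 by (try apply cond_pos; lra); reflexivity).
      apply Rlt_Rpower_l; lra.
  - apply continuous_ext_loc with (fun u => Rpower u y).
    + apply (filter_imp (fun u => 0 < u)); [|exact (open_gt 0 x Hx)].
      intros u Hu. symmetry. apply Rpower0_pos. assumption.
    + apply (ex_derive_continuous _ _ (ex_intro _ _ (is_derive_Rpower y x Hx))).
Qed.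

Lemma Rpower_at_right_0 (y : R) : 0 < y -> filterlim (fun x => Rpower x y) (at_right 0) (locally 0).
Proof.
  intro Hy. apply (filterlim_ext_loc (fun u => Rpower0 u y)).
  - unfold at_right, within. apply filter_forall. intros u Hu. apply Rpower0_pos, Hu.
  - pose proof (continuous_at_right _ 0 (continuous_Rpower0 y 0 Hy)) as H0.
    cbv beta in H0. rewrite Rpower0_nonpos in H0 by lra. exact H0.
Qed.

Section Domination.

Context {T : Type} (F : (T -> Prop) -> Prop) {FF : Filter F}.

Lemma domin_ext_loc (f g1 g2 : T -> R) :
  F (fun x => g1 x = g2 x) -> is_domin F f g1 -> is_domin F f g2.
Proof.
  intros Heq Hd eps. eapply filter_imp; [|exact (filter_and _ _ Heq (Hd eps))].
  intros x [<- H]. exact H.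
Qed.

Lemma domin_of_le_vanishing (f g h : T -> R) :
  filterlim h F (locally 0) -> F (fun x => Rabs (g x) <= h x * Rabs (f x)) ->
  is_domin F f g.
Proof.
  intros Hh Hle eps. apply filterlim_locally with (eps := eps) in Hh.
  eapply filter_imp; [|exact (filter_and _ _ Hh Hle)].
  intros x [Hx Hgx]. change (Rabs (h x - 0) < eps) in Hx. change (Rabs (g x) <= eps * Rabs (f x)).
  apply Rabs_def2 in Hx. pose proof (Rabs_pos (f x)). nra.
Qed.

Lemma domin_bigO_l (f g h : T -> R) (B : R) : 0 < B ->
  F (fun x => Rabs (g x) <= B * Rabs (f x)) -> is_domin F g h -> is_domin F f h.
Proof.
  intros HB Hle Hd eps.
  assert (Heps : 0 < eps / B) by (apply Rdiv_lt_0_compat; [apply cond_pos | exact HB]).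
  eapply filter_imp; [|exact (filter_and _ _ Hle (Hd (mkposreal _ Heps)))].
  intros x [Hgx Hhx]. change (Rabs (h x) <= eps / B * Rabs (g x)) in Hhx.
  change (Rabs (h x) <= eps * Rabs (f x)).
  apply (Rle_trans _ _ _ Hhx). replace (eps * Rabs (f x)) with (eps / B * (B * Rabs (f x)))
    by (field; lra).
  apply Rmult_le_compat_l; lra.
Qed.

Lemma filterlim_div_of_domin (f g : T -> R) :
  F (fun x => f x <> 0) -> is_domin F f g -> filterlim (fun x => g x / f x) F (locally 0).
Proof.
  intros Hf Hd. apply filterlim_locally. intros eps.
  assert (Heps : 0 < eps / 2) by (generalize (cond_pos eps); lra).
  eapply filter_imp; [|exact (filter_and _ _ Hf (Hd (mkposreal _ Heps)))].
  intros x [Hfx Hgx]. change (Rabs (g x) <= eps / 2 * Rabs (f x)) in Hgx.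
  change (Rabs (g x / f x - 0) < eps).
  rewrite Rminus_0_r, Rabs_div by exact Hfx.
  pose proof (Rabs_pos_lt _ Hfx). apply Rlt_div_l; [assumption|].
  generalize (cond_pos eps). nra.
Qed.

Lemma filterlim_of_bigO (f g : T -> R) (B : R) : 0 < B ->
  filterlim f F (locally 0) -> F (fun x => Rabs (g x) <= B * Rabs (f x)) ->
  filterlim g F (locally 0).
Proof.
  intros HB Hf Hle. apply filterlim_locally. intros eps.
  assert (Heps : 0 < eps / B) by (apply Rdiv_lt_0_compat; [apply cond_pos | exact HB]).
  apply filterlim_locally with (eps := mkposreal _ Heps) in Hf.
  eapply filter_imp; [|exact (filter_and _ _ Hf Hle)].
  intros x [Hfx Hgx]. change (Rabs (f x - 0) < eps / B) in Hfx.
  change (Rabs (g x - 0) < eps). rewrite Rminus_0_r in *.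
  apply (Rle_lt_trans _ _ _ Hgx). apply Rlt_div_r in Hfx; [|exact HB]. lra.
Qed.

Lemma is_derive_domin (f : R -> R) (x l : R) : is_derive f x l ->
  is_domin (locally x) (fun y => y - x) (fun y => f y - f x - (y - x) * l).
Proof. intros [_ Hd] eps. exact (Hd x (fun P H => H) eps). Qed.

Lemma domin_exp_sub_one (f y : T -> R) (B : R) : 0 < B ->
  filterlim f F (locally 0) -> F (fun x => Rabs (y x) <= B * Rabs (f x)) ->
  is_domin F f (fun x => exp (y x) - 1 - y x).
Proof.
  intros HB Hf Hle. apply (domin_bigO_l _ y _ B HB Hle).
  assert (Hy : filterlim y F (locally 0)) by exact (filterlim_of_bigO _ _ B HB Hf Hle).
  pose proof (proj2 (is_derive_Reals _ _ _) (derivable_pt_lim_exp 0)) as Hexp.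
  rewrite exp_0 in Hexp.
  intros eps.
  eapply filter_imp; [|exact (domin_comp F _ _ _ y Hy (is_derive_domin _ _ _ Hexp) eps)].
  intros x. change (Rabs (exp (y x) - exp 0 - (y x - 0) * 1) <= eps * Rabs (y x - 0) ->
    Rabs (exp (y x) - 1 - y x) <= eps * Rabs (y x)).
  rewrite exp_0, Rminus_0_r, Rmult_1_r. exact (fun H => H).
Qed.

Lemma domin_exp_expansion (f Y : T -> R) (Y0 k c : R) :
  filterlim f F (locally 0) -> is_domin F f (fun x => Y x - Y0 + c * f x) ->
  is_domin F f (fun x => exp (k * Y0) * (exp (k * Y x) - 1)
    - (exp (k * Y0) * (exp (k * Y0) - 1) - k * c * exp (2 * k * Y0) * f x)).
Proof.
  intros Hf HE.
  set (B := Rabs k * (1 + Rabs c) + 1).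
  assert (HB : 0 < B) by (unfold B; pose proof (Rabs_pos k); pose proof (Rabs_pos c); nra).
  assert (Hy : F (fun x => Rabs (k * (Y x - Y0)) <= B * Rabs (f x))).
  { eapply filter_imp; [|exact (HE (mkposreal 1 Rlt_0_1))].
    intros x HEx. change (Rabs (Y x - Y0 + c * f x) <= 1 * Rabs (f x)) in HEx.
    replace (Y x - Y0) with ((Y x - Y0 + c * f x) - c * f x) by ring.
    assert (Htri : Rabs (Y x - Y0 + c * f x - c * f x)
                   <= Rabs (Y x - Y0 + c * f x) + Rabs (c * f x))
      by (unfold Rminus at 2; rewrite <- (Rabs_Ropp (c * f x)); apply Rabs_triang).
    rewrite Rabs_mult in *. unfold B.
    pose proof (Rabs_pos k). pose proof (Rabs_pos c). pose proof (Rabs_pos (f x)). nra. }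
  apply (domin_ext_loc _ (fun x => exp (2 * k * Y0) *
    ((exp (k * (Y x - Y0)) - 1 - k * (Y x - Y0)) + k * (Y x - Y0 + c * f x)))).
  - apply filter_forall. intros x.
    replace (2 * k * Y0) with (k * Y0 + k * Y0) by ring.
    replace (k * Y x) with (k * Y0 + k * (Y x - Y0)) by ring.
    rewrite !exp_plus. ring.
  - apply (domin_scal_r f (fun x => (exp (k * (Y x - Y0)) - 1 - k * (Y x - Y0))
      + k * (Y x - Y0 + c * f x)) (exp (2 * k * Y0))).
    apply (domin_plus f (fun x => exp (k * (Y x - Y0)) - 1 - k * (Y x - Y0))
      (fun x => k * (Y x - Y0 + c * f x))).
    + exact (domin_exp_sub_one f _ B HB Hf Hy).
    + exact (domin_scal_r f _ k HE).
Qed.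

End Domination.

Lemma iota_empty (P : R -> Prop) : (forall x, ~ P x) -> iota P = 0.
Proof.
  intros HP. unfold iota, lim. simpl. unfold R_complete_lim.
  replace (Lub_Rbar _) with p_infty; [reflexivity|].
  symmetry. apply is_lub_Rbar_unique. split; [intros x _; exact I|].
  intros b Hb. destruct b as [r| |]; simpl; try exact I.
  - assert (r + 1 <= r) by (apply (Hb (r + 1)); intros x Hx; destruct (HP x Hx)). lra.
  - apply (Hb 0). intros x Hx. destruct (HP x Hx).
Qed.

(* Riemann integrability on [x, x + a] forces boundedness there, so an integrand
   unbounded near [x+] has no improper integral in Coquelicot's sense over the
   degenerate interval, and [RInt_gen] returns its default value [0]. *)
Lemma RInt_gen_degenerate_unbounded (f : R -> R) (x : R) :
  (forall a M, 0 < a -> exists t, x < t <= x + a /\ M < Rabs (f t)) ->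
  RInt_gen f (at_right x) (at_point x) = 0.
Proof.
  intro Hunb. unfold RInt_gen. apply iota_empty. intros l Hl.
  destruct (Hl (fun _ => True) filter_true) as [Q Q' [eps HQ] HQ' HQQ'].
  assert (Ha : 0 < eps / 2) by (generalize (cond_pos eps); lra).
  assert (HQa : Q (x + eps / 2)).
  { apply HQ; [|lra]. change (Rabs (x + eps / 2 - x) < eps).
    rewrite Rabs_pos_eq; lra. }
  destruct (HQQ' _ _ HQa HQ') as [y [Hy _]].
  destruct (ex_RInt_ub f _ _ (ex_intro _ y Hy)) as [M HM].
  destruct (Hunb (eps / 2) M Ha) as [t [Ht HMt]].
  assert (HMt' : Rabs (f t) <= M).
  { apply HM. simpl. rewrite Rmin_right, Rmax_left; lra. }
  lra.
Qed.

Lemma is_RInt_gen_at_right_primitive (f F : R -> R) (a b : R) : a < b ->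
  (forall x, a < x -> is_derive F x (f x)) -> (forall x, a < x -> continuous f x) ->
  continuous F a -> is_RInt_gen f (at_right a) (at_point b) (F b - F a).
Proof.
  intros Hab HF Hf HFa.
  assert (Hright : forall P : R * R -> Prop, (forall u, a < u -> P (u, b)) ->
    filter_prod (at_right a) (at_point b) P).
  { intros P HP. apply Filter_prod with (fun u => a < u) (fun v => v = b).
    - unfold at_right, within. apply filter_forall. trivial.
    - reflexivity.
    - intros u v Hu ->. apply HP, Hu. }
  assert (Hbetween : forall u x, a < u -> Rmin u b <= x <= Rmax u b -> a < x).
  { intros u x Hu Hx. pose proof (Rmin_glb_lt u b a Hu Hab). lra. }
  apply is_RInt_gen_ext with (Derive F).
  - apply Hright. intros u Hu x Hx. simpl in Hx. apply is_derive_unique, HF.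
    apply (Hbetween u); [exact Hu|lra].
  - apply is_RInt_gen_Derive.
    + apply Hright. intros u Hu x Hx. eexists. exact (HF x (Hbetween u x Hu Hx)).
    + apply Hright. intros u Hu x Hx. pose proof (Hbetween u x Hu Hx) as Hax.
      apply continuous_ext_loc with f; [|apply Hf, Hax].
      apply (filter_imp (fun y => a < y)); [|exact (open_gt a x Hax)].
      intros y Hy. symmetry. apply is_derive_unique, HF, Hy.
    + exact (continuous_at_right F a HFa).
    + intros P HP. exact (locally_singleton _ _ HP).
Qed.

Lemma continuous_cosh_affine (k c x : R) : continuous (fun u => cosh (k * (c - u))) x.
Proof. apply (ex_derive_continuous (V := R_NormedModule)). auto_derive. exact I. Qed.

Definition sinh_kernel (lam s tau u : R) : R := sinh (lam * (tau - u)) * Rpower0 u s.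

Lemma continuous_sinh_kernel (lam s tau x : R) : 0 < s -> continuous (sinh_kernel lam s tau) x.
Proof.
  intro Hs. apply (continuous_mult (fun u => sinh (lam * (tau - u))) (fun u => Rpower0 u s)).
  - apply (ex_derive_continuous (V := R_NormedModule)). auto_derive. exact I.
  - apply continuous_Rpower0, Hs.
Qed.

Lemma ex_RInt_sinh_kernel (lam s tau a b : R) : 0 < s -> ex_RInt (sinh_kernel lam s tau) a b.
Proof.
  intro Hs. apply (ex_RInt_continuous (V := R_CompleteNormedModule)).
  intros z _. apply continuous_sinh_kernel, Hs.
Qed.

Lemma is_derive_RInt_lower (g : R -> R) (b x : R) : (forall z, continuous g z) ->
  is_derive (fun u => RInt g u b) x (- g x).
Proof.
  intro Hg. apply (is_derive_RInt' g _ x b); [|apply Hg].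
  apply filter_forall. intros u. apply (RInt_correct (V := R_CompleteNormedModule)).
  apply (ex_RInt_continuous (V := R_CompleteNormedModule)). intros z _. apply Hg.
Qed.

Lemma is_derive_RInt_upper (g : R -> R) (a x : R) : (forall z, continuous g z) ->
  is_derive (fun u => RInt g a u) x (g x).
Proof.
  intro Hg. apply (is_derive_RInt g _ a x); [|apply Hg].
  apply filter_forall. intros u. apply (RInt_correct (V := R_CompleteNormedModule)).
  apply (ex_RInt_continuous (V := R_CompleteNormedModule)). intros z _. apply Hg.
Qed.

(* Integration by parts against [u^s / s]; the boundary term at [0] vanishes because
   [Rpower0 0 s = 0]. *)
Definition cosh_kernel_primitive (lam s tau u : R) : R :=
  (cosh (lam * (tau - u)) * Rpower0 u s - lam * RInt (sinh_kernel lam s tau) u tau) / s.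

Lemma is_derive_cosh_kernel_primitive (lam s tau x : R) : 0 < s -> 0 < x ->
  is_derive (cosh_kernel_primitive lam s tau) x (cosh (lam * (tau - x)) * Rpower x (s - 1)).
Proof.
  intros Hs Hx.
  apply is_derive_ext_loc with (fun u => (cosh (lam * (tau - u)) * Rpower u s
    - lam * RInt (sinh_kernel lam s tau) u tau) / s).
  { apply (filter_imp (fun u => 0 < u)); [|exact (open_gt 0 x Hx)].
    intros u Hu. unfold cosh_kernel_primitive. rewrite Rpower0_pos by exact Hu. reflexivity. }
  pose proof (is_derive_Rpower s x Hx) as Dpow.
  auto_derive.
  - split; [eexists; exact Dpow|]. split; [apply ex_RInt_sinh_kernel, Hs|]. split; [|exact I].
    apply filter_forall. intros z. apply continuity_pt_filterlim, continuous_sinh_kernel, Hs.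
  - rewrite (is_derive_unique (fun u : R => Rpower u s) x _ Dpow).
    unfold sinh_kernel. rewrite Rpower0_pos by exact Hx.
    replace (Rpower x s) with (Rpower x (s - 1) * x)
      by (rewrite <- (Rpower_1 x) at 2 by exact Hx; rewrite <- Rpower_plus; f_equal; ring).
    replace (tau + - x) with (tau - x) by ring. field. lra.
Qed.

Lemma continuous_cosh_kernel_primitive (lam s tau x : R) : 0 < s ->
  continuous (cosh_kernel_primitive lam s tau) x.
Proof.
  intro Hs. unfold cosh_kernel_primitive.
  apply (continuous_mult (fun u => cosh (lam * (tau - u)) * Rpower0 u s
    - lam * RInt (sinh_kernel lam s tau) u tau) (fun _ => / s)); [|apply continuous_const].
  apply (continuous_minus (fun u => cosh (lam * (tau - u)) * Rpower0 u s)).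
  - apply (continuous_mult (fun u => cosh (lam * (tau - u)))).
    + apply continuous_cosh_affine.
    + apply continuous_Rpower0, Hs.
  - apply (continuous_scal_r lam (fun u => RInt (sinh_kernel lam s tau) u tau)).
    apply (ex_derive_continuous (V := R_NormedModule)). eexists.
    apply is_derive_RInt_lower. intro z. apply continuous_sinh_kernel, Hs.
Qed.

Lemma RInt_gen_cosh_kernel (lam s tau : R) : 0 < s -> 0 < tau ->
  RInt_gen (fun u => cosh (lam * (tau - u)) * Rpower u (s - 1)) (at_right 0) (at_point tau)
  = Rpower tau s / s + lam / s * RInt (sinh_kernel lam s tau) 0 tau.
Proof.
  intros Hs Htau. apply (is_RInt_gen_unique (V := R_CompleteNormedModule)).
  replace (Rpower tau s / s + lam / s * RInt (sinh_kernel lam s tau) 0 tau)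
    with (cosh_kernel_primitive lam s tau tau - cosh_kernel_primitive lam s tau 0).
  - apply is_RInt_gen_at_right_primitive; [exact Htau | | |].
    + intros x Hx. apply is_derive_cosh_kernel_primitive; assumption.
    + intros x Hx. apply (continuous_mult (fun u => cosh (lam * (tau - u))));
        [apply continuous_cosh_affine|].
      apply (ex_derive_continuous (V := R_NormedModule)). eexists.
      apply is_derive_Rpower, Hx.
    + apply continuous_cosh_kernel_primitive, Hs.
  - unfold cosh_kernel_primitive.
    rewrite Rpower0_pos, Rpower0_nonpos, RInt_point by lra.
    replace (lam * (tau - tau)) with 0 by ring. rewrite cosh_0.
    change (zero : R) with 0. field. lra.
Qed.

Lemma RInt_gen_cosh_kernel_0 (lam s : R) : s < 1 ->
  RInt_gen (fun u => cosh (lam * (0 - u)) * Rpower u (s - 1)) (at_right 0) (at_point 0) = 0.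
Proof.
  intro Hs. apply RInt_gen_degenerate_unbounded. intros a M Ha.
  set (b := Rpower (Rabs M + 1) (/ (s - 1))).
  assert (Hb : 0 < b) by apply exp_pos.
  assert (Hmin_pos : 0 < Rmin a b) by (apply Rmin_glb_lt; assumption).
  exists (Rmin a b). split; [split; [exact Hmin_pos | rewrite Rplus_0_l; apply Rmin_l]|].
  assert (Hbs : Rpower b (s - 1) = Rabs M + 1).
  { unfold b. rewrite Rpower_mult, Rinv_l, Rpower_1 by (try pose proof (Rabs_pos M); lra).
    reflexivity. }
  assert (Hmin : Rpower b (s - 1) <= Rpower (Rmin a b) (s - 1)).
  { rewrite <- (Ropp_involutive (s - 1)), !(Rpower_Ropp _ (- (s - 1))).
    apply Rinv_le_contravar; [apply exp_pos|].
    apply Rle_Rpower_l; [lra | split; [exact Hmin_pos | apply Rmin_r]]. }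
  assert (Hcosh : 1 <= cosh (lam * (0 - Rmin a b))).
  { unfold cosh. pose proof (exp_ineq1_le (lam * (0 - Rmin a b))).
    pose proof (exp_ineq1_le (- (lam * (0 - Rmin a b)))). lra. }
  assert (Hpos : 0 < Rpower (Rmin a b) (s - 1)) by apply exp_pos.
  rewrite Rabs_pos_eq by nra. pose proof (Rle_abs M). nra.
Qed.

Lemma R_Y_0 (H lam th : R) : H < 1 / 2 ->
  R_Y H lam th 0 = th ^ 2 * (Gamma (2 * H + 1) / (2 * Rpower lam (2 * H))).
Proof.
  intro HH. unfold R_Y. rewrite RInt_gen_cosh_kernel_0 by lra.
  rewrite Rmult_0_r, cosh_0. field. apply Rgt_not_eq, exp_pos.
Qed.

Lemma R_Y_pos (H lam th t : R) : 0 < H -> 0 < t ->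
  R_Y H lam th t = th ^ 2 * (Gamma (2 * H + 1) * cosh (lam * t) / (2 * Rpower lam (2 * H))
    - H * (Rpower t (2 * H) / (2 * H) + lam / (2 * H) * RInt (sinh_kernel lam (2 * H) t) 0 t)).
Proof. intros HH Ht. unfold R_Y. rewrite RInt_gen_cosh_kernel by lra. reflexivity. Qed.

Lemma domin_cosh_sub_one (lam s : R) : s <= 1 ->
  is_domin (at_right 0) (fun t => Rpower t s) (fun t => cosh (lam * t) - 1).
Proof.
  intro Hs.
  assert (Dcosh : is_derive (fun t => cosh (lam * t)) 0 0).
  { auto_derive; [exact I|]. rewrite Rmult_0_r, sinh_0. ring. }
  apply (domin_bigO_l _ _ (fun t => t - 0) _ 1 Rlt_0_1).
  - exists (mkposreal 1 Rlt_0_1). intros t Ht Ht0.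
    change (Rabs (t - 0) < 1) in Ht. rewrite Rminus_0_r, Rabs_pos_eq in * by lra.
    rewrite Rabs_pos_eq by (left; apply exp_pos).
    pose proof (Rpower_ge_base t s (conj Ht0 Ht) Hs). lra.
  - apply (domin_ext_loc _ _ (fun t => cosh (lam * t) - cosh (lam * 0) - (t - 0) * 0)).
    + apply filter_forall. intros t. rewrite Rmult_0_r, cosh_0. ring.
    + apply (is_domin_le _ _ (is_derive_domin _ _ _ Dcosh)), filter_le_within.
Qed.

Lemma domin_RInt_sinh_kernel (lam s : R) : 0 <= lam -> 0 < s ->
  is_domin (at_right 0) (fun t => Rpower t s) (fun t => RInt (sinh_kernel lam s t) 0 t).
Proof.
  intros Hlam Hs. apply (domin_of_le_vanishing _ _ _ (fun t => t * sinh (lam * t))).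
  - assert (Hc : continuous (fun t => t * sinh (lam * t)) 0)
      by (apply (ex_derive_continuous (V := R_NormedModule)); auto_derive; exact I).
    pose proof (continuous_at_right _ 0 Hc) as H0. cbv beta in H0.
    rewrite Rmult_0_l in H0. exact H0.
  - exists (mkposreal 1 Rlt_0_1). intros t _ Ht.
    rewrite (Rabs_pos_eq (Rpower t s)) by (left; apply exp_pos).
    replace (t * sinh (lam * t) * Rpower t s)
      with ((t - 0) * (sinh (lam * t) * Rpower t s)) by ring.
    apply abs_RInt_le_const; [lra | apply ex_RInt_sinh_kernel, Hs |].
    intros u Hu. unfold sinh_kernel. rewrite Rabs_mult.
    apply Rmult_le_compat; try apply Rabs_pos.
    + assert (Hsinh : forall x y, x <= y -> sinh x <= sinh y)
        by (intros x y [Hxy | ->]; [left; apply sinh_lt, Hxy | right; reflexivity]).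
      assert (0 <= lam * (t - u)) by nra.
      rewrite Rabs_pos_eq by (rewrite <- sinh_0; apply Hsinh; assumption).
      apply Hsinh. nra.
    + destruct (Rle_or_lt u 0) as [Hu0 | Hu0].
      * rewrite Rpower0_nonpos, Rabs_R0 by exact Hu0. left; apply exp_pos.
      * rewrite Rpower0_pos, Rabs_pos_eq by (try left; try apply exp_pos; exact Hu0).
        apply Rle_Rpower_l; lra.
Qed.

Lemma R_Y_expansion (H lam th : R) : 0 < H < 1 / 2 -> 0 <= lam ->
  is_domin (at_right 0) (fun t => Rpower t (2 * H))
    (fun t => R_Y H lam th t - R_Y H lam th 0 + th ^ 2 / 2 * Rpower t (2 * H)).
Proof.
  intros [H0 H1] Hlam.
  set (A := th ^ 2 * (Gamma (2 * H + 1) / (2 * Rpower lam (2 * H)))).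
  apply (domin_ext_loc _ _ (fun t => A * (cosh (lam * t) - 1)
    + (- (th ^ 2 * lam / 2)) * RInt (sinh_kernel lam (2 * H) t) 0 t)).
  - exists (mkposreal 1 Rlt_0_1). intros t _ Ht.
    rewrite R_Y_pos, R_Y_0 by lra. unfold A. field.
    split; [apply Rgt_not_eq, exp_pos | lra].
  - apply (domin_plus _ (fun t => A * (cosh (lam * t) - 1))
      (fun t => - (th ^ 2 * lam / 2) * RInt (sinh_kernel lam (2 * H) t) 0 t)).
    + apply (domin_scal_r _ (fun t => cosh (lam * t) - 1)), domin_cosh_sub_one. lra.
    + apply (domin_scal_r _ (fun t => RInt (sinh_kernel lam (2 * H) t) 0 t)).
      apply domin_RInt_sinh_kernel; lra.
Qed.

Inductive smooth_on_pos : (R -> R) -> Prop :=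
  | smooth_const c : smooth_on_pos (fun _ => c)
  | smooth_cosh k : smooth_on_pos (fun x => cosh (k * x))
  | smooth_sinh k : smooth_on_pos (fun x => sinh (k * x))
  | smooth_Rpower y : smooth_on_pos (fun x => Rpower x y)
  | smooth_RInt g : (forall z, continuous g z) -> smooth_on_pos g ->
      smooth_on_pos (fun x => RInt g 0 x)
  | smooth_plus f g : smooth_on_pos f -> smooth_on_pos g -> smooth_on_pos (fun x => f x + g x)
  | smooth_mult f g : smooth_on_pos f -> smooth_on_pos g -> smooth_on_pos (fun x => f x * g x)
  | smooth_exp f : smooth_on_pos f -> smooth_on_pos (fun x => exp (f x))
  | smooth_ext f g : smooth_on_pos f -> (forall x, 0 < x -> f x = g x) -> smooth_on_pos g.

Lemma smooth_on_pos_is_derive (f : R -> R) : smooth_on_pos f ->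
  exists f', smooth_on_pos f' /\ forall x, 0 < x -> is_derive f x (f' x).
Proof.
  induction 1 as [c | k | k | y | g Hg Hsg _ | f g _ [f' [Hf' Df]] _ [g' [Hg' Dg]]
    | f g Hf [f' [Hf' Df]] Hg [g' [Hg' Dg]] | f Hf [f' [Hf' Df]] | f g _ [f' [Hf' Df]] Hfg].
  - exists (fun _ => 0). split; [apply smooth_const|].
    intros x _. apply (is_derive_const (K := R_AbsRing) c).
  - exists (fun x => k * sinh (k * x)).
    split; [apply (smooth_mult (fun _ => k)); constructor|].
    intros x _. auto_derive; [exact I | ring].
  - exists (fun x => k * cosh (k * x)).
    split; [apply (smooth_mult (fun _ => k)); constructor|].
    intros x _. auto_derive; [exact I | ring].
  - exists (fun x => y * Rpower x (y - 1)).
    split; [apply (smooth_mult (fun _ => y)); constructor|].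
    intros x Hx. apply is_derive_Rpower, Hx.
  - exists g. split; [exact Hsg|]. intros x _. apply is_derive_RInt_upper, Hg.
  - exists (fun x => f' x + g' x). split; [apply smooth_plus; assumption|].
    intros x Hx. apply (is_derive_plus f g); [apply Df | apply Dg]; exact Hx.
  - exists (fun x => f' x * g x + f x * g' x).
    split; [apply smooth_plus; apply smooth_mult; assumption|].
    intros x Hx. apply (is_derive_mult f g); [apply Df, Hx | apply Dg, Hx | exact Rmult_comm].
  - exists (fun x => f' x * exp (f x)).
    split; [apply smooth_mult, smooth_exp; assumption|].
    intros x Hx. apply (is_derive_comp exp f); [|apply Df, Hx].
    apply is_derive_Reals, derivable_pt_lim_exp.
  - exists f'. split; [assumption|]. intros x Hx.
    apply (is_derive_ext_loc f); [|apply Df, Hx].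
    apply (filter_imp (fun u => 0 < u)); [|exact (open_gt 0 x Hx)]. exact Hfg.
Qed.

Lemma smooth_on_pos_Derive_n (f : R -> R) (n : nat) : smooth_on_pos f ->
  exists g, smooth_on_pos g /\ forall x, 0 < x -> Derive_n f n x = g x.
Proof.
  intro Hf. induction n as [|n [g [Hg Heq]]]; [exists f; split; [exact Hf | reflexivity]|].
  destruct (smooth_on_pos_is_derive g Hg) as [g' [Hg' Dg]].
  exists g'. split; [exact Hg'|]. intros x Hx. simpl.
  rewrite (Derive_ext_loc _ g); [apply is_derive_unique, Dg, Hx|].
  apply (filter_imp (fun u => 0 < u)); [exact Heq | exact (open_gt 0 x Hx)].
Qed.

Lemma smooth_on_pos_ex_derive_n (f : R -> R) (n : nat) (x : R) : smooth_on_pos f -> 0 < x ->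
  ex_derive_n f n x.
Proof.
  intros Hf Hx. destruct n as [|n]; [exact I|].
  destruct (smooth_on_pos_Derive_n f n Hf) as [g [Hg Heq]].
  destruct (smooth_on_pos_is_derive g Hg) as [g' [_ Dg]].
  apply (ex_derive_ext_loc g).
  - apply (filter_imp (fun u => 0 < u)); [|exact (open_gt 0 x Hx)].
    intros u Hu. symmetry. apply Heq, Hu.
  - exists (g' x). apply Dg, Hx.
Qed.

Definition cosh_Rpower0 (lam s u : R) : R := cosh (lam * u) * Rpower0 u s.
Definition sinh_Rpower0 (lam s u : R) : R := sinh (lam * u) * Rpower0 u s.

Lemma continuous_cosh_Rpower0 (lam s x : R) : 0 < s -> continuous (cosh_Rpower0 lam s) x.
Proof.
  intro Hs. apply (continuous_mult (fun u => cosh (lam * u))); [|apply continuous_Rpower0, Hs].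
  apply (ex_derive_continuous (V := R_NormedModule)). auto_derive. exact I.
Qed.

Lemma continuous_sinh_Rpower0 (lam s x : R) : 0 < s -> continuous (sinh_Rpower0 lam s) x.
Proof.
  intro Hs. apply (continuous_mult (fun u => sinh (lam * u))); [|apply continuous_Rpower0, Hs].
  apply (ex_derive_continuous (V := R_NormedModule)). auto_derive. exact I.
Qed.

Lemma RInt_sinh_kernel_split (lam s t : R) : 0 < s ->
  RInt (sinh_kernel lam s t) 0 t
  = sinh (lam * t) * RInt (cosh_Rpower0 lam s) 0 t - cosh (lam * t) * RInt (sinh_Rpower0 lam s) 0 t.
Proof.
  intro Hs.
  assert (Ic : ex_RInt (cosh_Rpower0 lam s) 0 t).
  { apply (ex_RInt_continuous (V := R_CompleteNormedModule)). intros z _.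
    apply continuous_cosh_Rpower0, Hs. }
  assert (Is : ex_RInt (sinh_Rpower0 lam s) 0 t).
  { apply (ex_RInt_continuous (V := R_CompleteNormedModule)). intros z _.
    apply continuous_sinh_Rpower0, Hs. }
  rewrite (RInt_ext _ (fun u => sinh (lam * t) * cosh_Rpower0 lam s u
    - cosh (lam * t) * sinh_Rpower0 lam s u)).
  - rewrite (RInt_minus (V := R_CompleteNormedModule));
      [| exact (ex_RInt_scal (cosh_Rpower0 lam s) 0 t (sinh (lam * t)) Ic)
       | exact (ex_RInt_scal (sinh_Rpower0 lam s) 0 t (cosh (lam * t)) Is)].
    rewrite !(RInt_scal (V := R_CompleteNormedModule)) by assumption. reflexivity.
  - intros u _. change (sinh_kernel lam s t u = sinh (lam * t) * cosh_Rpower0 lam s u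
      - cosh (lam * t) * sinh_Rpower0 lam s u).
    unfold sinh_kernel, cosh_Rpower0, sinh_Rpower0, sinh, cosh.
    replace (lam * (t - u)) with (lam * t + - (lam * u)) by ring.
    replace (- (lam * t + - (lam * u))) with (- (lam * t) + lam * u) by ring.
    rewrite !exp_plus. field.
Qed.

Lemma smooth_on_pos_R_Y (H lam th : R) : 0 < H -> smooth_on_pos (R_Y H lam th).
Proof.
  intro HH. set (s := 2 * H).
  assert (Hs : 0 < s) by (unfold s; lra).
  set (A := th ^ 2 * (Gamma (2 * H + 1) / (2 * Rpower lam s))).
  apply smooth_ext with (fun t => A * cosh (lam * t) + (- (th ^ 2) / 2 * Rpower t s
    + (- (th ^ 2 * lam) / 2 * (sinh (lam * t) * RInt (cosh_Rpower0 lam s) 0 t)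
    + th ^ 2 * lam / 2 * (cosh (lam * t) * RInt (sinh_Rpower0 lam s) 0 t)))).
  - repeat first [apply smooth_const | apply smooth_cosh | apply smooth_sinh | apply smooth_Rpower
      | apply smooth_plus | apply smooth_mult].
    + apply smooth_RInt; [intro z; apply continuous_cosh_Rpower0, Hs|].
      apply smooth_ext with (fun u => cosh (lam * u) * Rpower u s).
      * apply smooth_mult; [apply smooth_cosh | apply smooth_Rpower].
      * intros u Hu. unfold cosh_Rpower0. rewrite Rpower0_pos by exact Hu. reflexivity.
    + apply smooth_RInt; [intro z; apply continuous_sinh_Rpower0, Hs|].
      apply smooth_ext with (fun u => sinh (lam * u) * Rpower u s).
      * apply smooth_mult; [apply smooth_sinh | apply smooth_Rpower].
      * intros u Hu. unfold sinh_Rpower0. rewrite Rpower0_pos by exact Hu. reflexivity.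
  - intros t Ht. rewrite R_Y_pos, RInt_sinh_kernel_split by assumption.
    unfold A, s. field. split; [lra | apply Rgt_not_eq, exp_pos].
Qed.

Lemma smooth_on_pos_R_Z (H lam th a : R) : 0 < H -> smooth_on_pos (R_Z H lam th a).
Proof.
  intro HH. unfold R_Z.
  apply smooth_ext with (fun t => exp (a ^ 2 * R_Y H lam th 0)
    * (exp (a ^ 2 * R_Y H lam th t) + -1)); [|intros t _; ring].
  apply smooth_mult; [apply smooth_const|].
  apply smooth_plus; [|apply smooth_const].
  apply smooth_exp, smooth_mult; [apply smooth_const | apply smooth_on_pos_R_Y, HH].
Qed.

Theorem lemma3 (H lambda theta a : R) :
  0 < H < 1 / 2 -> 0 < lambda -> 0 < theta -> a <> 0 ->
  (* R_Z is C^infty on (0, oo) *)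
  (forall (n : nat) (tau : R), 0 < tau -> ex_derive_n (R_Z H lambda theta a) n tau) /\
  (* R_Z(tau) = c0 - c1 tau^(2H) + o(tau^(2H)) as tau -> 0+ *)
  (let c0 := exp (a ^ 2 * R_Y H lambda theta 0) * (exp (a ^ 2 * R_Y H lambda theta 0) - 1) in
   let c1 := a ^ 2 * theta ^ 2 / 2 * exp (2 * a ^ 2 * R_Y H lambda theta 0) in
   filterlim
     (fun tau => (R_Z H lambda theta a tau - (c0 - c1 * Rpower tau (2 * H))) / Rpower tau (2 * H))
     (at_right 0) (locally 0)).
Proof.
  (* [theta > 0] and [a <> 0] only make [c1] nonzero; the expansion does not need them. *)
  intros HH Hlambda _ _. split.
  - intros n tau Htau. apply smooth_on_pos_ex_derive_n; [apply smooth_on_pos_R_Z | exact Htau]. lra.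
  - intros c0 c1. apply (filterlim_div_of_domin (at_right 0)).
    + unfold at_right, within. apply filter_forall. intros t _. apply Rgt_not_eq, exp_pos.
    + unfold c0, c1, R_Z. replace (a ^ 2 * theta ^ 2 / 2) with (a ^ 2 * (theta ^ 2 / 2)) by field.
      apply (domin_exp_expansion (at_right 0) (fun t => Rpower t (2 * H)) (R_Y H lambda theta)
        (R_Y H lambda theta 0) (a ^ 2) (theta ^ 2 / 2)).
      * apply Rpower_at_right_0. lra.
      * apply R_Y_expansion; lra.
Qed.
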